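(* In the setting of the context, with $R(t)=-\frac{\gamma}{\beta}\log\varphi^{-1}(t)$, we have $R(\infty):=\lim_{t\to\infty}R(t)=\alpha$, \[ R(\infty)=N-\tilde S e^{(\beta/\gamma)\tilde R}e^{-(\beta/\gamma)R(\infty)}, \] and $R$ is increasing on $[0,\infty)$ with $\tilde R\le R(t)<\alpha=R(\infty)$ for all $t\ge0$.
   Context: Let $\beta,\gamma,\delta>0$ be constants and $\tilde S,\tilde E,\tilde I,\tilde R$ real numbers with $N:=\tilde S+\tilde E+\tilde I+\tilde R>0$. Standing assumptions: (A1) $\tilde I>0$; (A2) $\tilde E>(\gamma/\delta)\tilde I$; (A3) $\tilde S>\delta\tilde E/(\beta\tilde I)$; (A4) $\tilde R\ge 0$ and $N>\tilde S e^{(\beta/\gamma)\tilde R}+\tilde R$. Let $\alpha$ be the unique solution in $(\tilde R,N)$ of $x=N-\tilde S e^{(\beta/\gamma)\tilde R}e^{-(\beta/\gamma)x}$, and assume (A5) $\tilde S<(\gamma/\beta)e^{(\beta/\gamma)(\alpha-\tilde R)}$. Put $u_0:=e^{-(\beta/\gamma)\tilde R}$, $u_\infty:=e^{-(\beta/\gamma)\alpha}$. Let $\psi$ be the unique function, continuous and positive on $(u_\infty,u_0]$ and $C^1$ on $(u_\infty,u_0)$, satisfying $\psi'(u)\psi(u)-\frac{\gamma+\delta}{u}\psi(u)=-\delta\,\frac{\beta N-\beta\tilde S e^{(\beta/\gamma)\tilde R}u+\gamma\log u}{u}$ on $(u_\infty,u_0)$ and $\psi(u_0)=\beta\tilde I$.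 Let $\varphi(u):=\int_u^{u_0}\frac{d\xi}{\xi\psi(\xi)}$; $\varphi$ is a strictly decreasing continuous bijection from $(u_\infty,u_0]$ onto $[0,\infty)$, with inverse $\varphi^{-1}:[0,\infty)\to(u_\infty,u_0]$. *)

From Stdlib Require Import Reals.
From Coquelicot Require Import Coquelicot.
Open Scope R_scope.

Definition phi_of (psi : R -> R) (u0 u : R) : R :=
  RInt (fun xi => / (xi * psi xi)) u u0.

Definition Rsol (beta gamma : R) (phiinv : R -> R) (t : R) : R :=
  - (gamma / beta) * ln (phiinv t).

(** The substitution [u = exp (-(beta/gamma) R)] turns [R] into
    [-(gamma/beta) ln u], which is strictly decreasing in [u].  Since [psi > 0],
    the integrand [1/(xi psi xi)] of [phi] is positive, so [phi] is strictly
    decreasing on [(u_inf, u0]] and hence so is its inverse on [[0, oo)].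
    Therefore [R] is strictly increasing, the range [(u_inf, u0]] of
    [phi^-1] gives [Rt <= R t < alpha], and since [phi c < t] forces
    [phi^-1 t < c], [phi^-1 t] tends to [u_inf], so [R t] tends to [alpha]
    by continuity of [ln]. *)

From Stdlib Require Import Reals Lra.
From Coquelicot Require Import Coquelicot.
Open Scope R_scope.

Lemma filterlim_at_left_of_continuous (f : R -> R) (b : R) :
  continuous f b -> filterlim f (at_left b) (locally (f b)).
Proof.
intros Hf; apply filterlim_comp with (2 := Hf).
intros P HP; now apply filter_le_within.
Qed.

Lemma continuous_comp_Rmin_r (f : R -> R) (b z : R) : z <= b ->
  (z < b -> continuous f z) ->
  filterlim f (at_left b) (locally (f b)) ->
  continuous (fun x => f (Rmin x b)) z.
Proof.
intros Hzb Hcont Hleft.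
destruct (Rle_lt_or_eq_dec _ _ Hzb) as [Hlt| ->].
- apply continuous_ext_loc with f; [|now apply Hcont].
  assert (Hd : 0 < b - z) by lra.
  exists (mkposreal _ Hd); intros y Hy.
  change (Rabs (y - z) < b - z) in Hy; apply Rabs_lt_between in Hy.
  rewrite Rmin_left; [reflexivity|lra].
- intros P HP; rewrite Rmin_left in HP by lra.
  destruct (Hleft P HP) as [d Hd].
  exists d; intros y Hy.
  destruct (Rlt_or_le y b) as [Hyb|Hyb].
  + rewrite Rmin_left by lra; now apply Hd.
  + rewrite Rmin_right by lra; now apply locally_singleton in HP.
Qed.

(* Clamping at [b] makes [f] continuous on all of [[a, b]] without changing
   it on [(a, b)], which lets the continuous-integrand lemmas apply. *)
Section LeftContinuousIntegrand.

Variables (f : R -> R) (a b : R).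
Hypothesis Hab : a <= b.
Hypothesis Hcont : forall z, a <= z < b -> continuous f z.
Hypothesis Hleft : filterlim f (at_left b) (locally (f b)).

Let clamped_continuous : forall z, a <= z <= b -> continuous (fun x => f (Rmin x b)) z.
Proof.
intros z Hz; apply continuous_comp_Rmin_r; [lra| |exact Hleft].
intros; apply Hcont; lra.
Qed.

Let clamped_eq : forall x, Rmin a b < x < Rmax a b -> f (Rmin x b) = f x.
Proof.
intros x Hx; rewrite Rmin_left, Rmax_right in Hx by lra.
now rewrite Rmin_left by lra.
Qed.

Lemma ex_RInt_left_continuous : ex_RInt f a b.
Proof.
apply ex_RInt_ext with (fun x => f (Rmin x b)); [exact clamped_eq|].
apply (@ex_RInt_continuous R_CompleteNormedModule); intros z Hz.
rewrite Rmin_left, Rmax_right in Hz by lra.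
now apply clamped_continuous.
Qed.

Lemma RInt_gt_0_left_continuous : a < b -> (forall x, a < x < b -> 0 < f x) ->
  0 < RInt f a b.
Proof.
intros Hlt Hpos.
rewrite <- (RInt_ext _ _ _ _ clamped_eq).
apply RInt_gt_0; [exact Hlt| |exact clamped_continuous].
intros x Hx; rewrite Rmin_left by lra; now apply Hpos.
Qed.

End LeftContinuousIntegrand.

Section PhiDecreasing.

Variables (psi : R -> R) (ui u0 : R).
Hypothesis Hui : 0 < ui.
Hypothesis Hpsi_pos : forall u, ui < u <= u0 -> 0 < psi u.
Hypothesis Hpsi_left : filterlim psi (at_left u0) (locally (psi u0)).
Hypothesis Hpsi_cont : forall u, ui < u < u0 -> continuous psi u.

Let integrand := fun xi : R => / (xi * psi xi).

Let integrand_pos : forall x, ui < x <= u0 -> 0 < integrand x.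
Proof.
intros x Hx; apply Rinv_0_lt_compat.
specialize (Hpsi_pos x Hx); nra.
Qed.

Let integrand_left_limit : forall b, ui < b <= u0 ->
  filterlim integrand (at_left b) (locally (integrand b)).
Proof.
intros b Hb.
assert (Hpsi_b : filterlim psi (at_left b) (locally (psi b))).
{ destruct (Rle_lt_or_eq_dec _ _ (proj2 Hb)) as [Hlt| ->]; [|exact Hpsi_left].
  apply filterlim_at_left_of_continuous, Hpsi_cont; lra. }
apply filterlim_comp with (f := fun x => x * psi x) (G := locally (b * psi b)).
- apply (filterlim_comp_2 (G := locally b) (H := locally (psi b)) (fun x => x) psi Rmult).
  + intros P HP; now apply filter_le_within.
  + exact Hpsi_b.
  + apply (@filterlim_mult R_AbsRing).
- apply continuous_Rinv.
  specialize (Hpsi_pos b Hb); nra.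
Qed.

Let integrand_continuous : forall z, ui < z < u0 -> continuous integrand z.
Proof.
intros z Hz; apply continuous_Rinv_comp.
- apply (@continuous_mult R_UniformSpace R_AbsRing); [apply continuous_id|].
  now apply Hpsi_cont.
- specialize (Hpsi_pos z ltac:(lra)); simpl; nra.
Qed.

Let ex_RInt_integrand : forall a b, ui < a <= b -> b <= u0 -> ex_RInt integrand a b.
Proof.
intros a b Ha Hb; apply ex_RInt_left_continuous;
  [lra | intros z Hz; apply integrand_continuous; lra | apply integrand_left_limit; lra].
Qed.

Lemma phi_of_decreasing a b : ui < a < b -> b <= u0 ->
  phi_of psi u0 b < phi_of psi u0 a.
Proof.
intros Ha Hb; unfold phi_of; fold integrand.
assert (Hsplit : RInt integrand a b + RInt integrand b u0 = RInt integrand a u0).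
{ apply (RInt_Chasles integrand); apply ex_RInt_integrand; lra. }
assert (Hgap : 0 < RInt integrand a b).
{ apply RInt_gt_0_left_continuous; try lra.
  - intros z Hz; apply integrand_continuous; lra.
  - apply integrand_left_limit; lra.
  - intros x Hx; apply integrand_pos; lra. }
lra.
Qed.

End PhiDecreasing.

Section DecreasingInverse.

Variables (phi phiinv : R -> R) (ui u0 : R).
Hypothesis Hui_u0 : ui < u0.
Hypothesis Hphi_decr : forall a b, ui < a < b -> b <= u0 -> phi b < phi a.
Hypothesis Hphiinv_range : forall t, 0 <= t -> ui < phiinv t <= u0.
Hypothesis Hphiinv_inv : forall t, 0 <= t -> phi (phiinv t) = t.

Lemma phiinv_lt_of_phi_lt c t : ui < c <= u0 -> 0 <= t -> phi c < t -> phiinv t < c.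
Proof.
intros Hc Ht Hlt.
destruct (Rlt_or_le (phiinv t) c) as [Hq|Hq]; [exact Hq|exfalso].
pose proof (Hphiinv_range t Ht).
destruct (Rle_lt_or_eq_dec _ _ Hq) as [Hq'|Hq'].
- pose proof (Hphi_decr c (phiinv t) ltac:(lra) ltac:(lra)).
  rewrite Hphiinv_inv in * by lra; lra.
- rewrite Hq', Hphiinv_inv in Hlt by lra; lra.
Qed.

Lemma phiinv_decreasing s t : 0 <= s -> s < t -> phiinv t < phiinv s.
Proof.
intros Hs Hst; apply phiinv_lt_of_phi_lt;
  [now apply Hphiinv_range | lra | now rewrite Hphiinv_inv].
Qed.

Lemma is_lim_phiinv_p_infty : is_lim phiinv p_infty ui.
Proof.
apply is_lim_spec; intros eps; simpl.
set (c := Rmin (ui + eps / 2) u0).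
assert (Hc : ui < c <= u0).
{ unfold c; destruct eps as [e He]; simpl.
  split; [apply Rmin_glb_lt; lra|apply Rmin_r]. }
assert (Hc_eps : c <= ui + eps / 2) by apply Rmin_l.
exists (Rmax 0 (phi c)); intros t Ht.
pose proof (Rmax_l 0 (phi c)); pose proof (Rmax_r 0 (phi c)).
pose proof (Hphiinv_range t ltac:(lra)).
pose proof (phiinv_lt_of_phi_lt c t Hc ltac:(lra) ltac:(lra)).
apply Rabs_lt_between; destruct eps as [e He]; simpl in *; lra.
Qed.

End DecreasingInverse.

Lemma neg_mul_ln_lt c u v : 0 < c -> 0 < u -> u < v -> - c * ln v < - c * ln u.
Proof. intros Hc Hu Huv; pose proof (ln_increasing u v Hu Huv); nra. Qed.

Lemma neg_mul_ln_le c u v : 0 < c -> 0 < u -> u <= v -> - c * ln v <= - c * ln u.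
Proof. intros Hc Hu Huv; pose proof (ln_le u v Hu Huv); nra. Qed.

Lemma neg_mul_ln_exp beta gamma x : 0 < beta -> 0 < gamma ->
  - (gamma / beta) * ln (exp (- (beta / gamma) * x)) = x.
Proof. intros Hb Hg; rewrite ln_exp; field; lra. Qed.

Lemma neg_mul_ln_bounds beta gamma a b v : 0 < beta -> 0 < gamma ->
  exp (- (beta / gamma) * a) < v <= exp (- (beta / gamma) * b) ->
  b <= - (gamma / beta) * ln v < a.
Proof.
intros Hb Hg [Hlo Hhi].
assert (Hc : 0 < gamma / beta) by (apply Rdiv_lt_0_compat; lra).
pose proof (exp_pos (- (beta / gamma) * a)).
rewrite <- (neg_mul_ln_exp beta gamma a), <- (neg_mul_ln_exp beta gamma b) at 1 by lra.
split; [apply neg_mul_ln_le|apply neg_mul_ln_lt]; lra.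
Qed.

Lemma is_lim_Rsol beta gamma phiinv x : 0 < beta -> 0 < gamma ->
  is_lim phiinv p_infty (exp (- (beta / gamma) * x)) ->
  is_lim (Rsol beta gamma phiinv) p_infty x.
Proof.
intros Hb Hg Hlim.
unfold Rsol; rewrite <- (neg_mul_ln_exp beta gamma x) by lra.
apply (is_lim_scal_l (fun t => ln (phiinv t)) _ _ (Finite _)).
apply is_lim_comp_continuous; [exact Hlim|apply continuous_ln, exp_pos].
Qed.

Theorem theorem7
  (beta gamma delta St Et It Rt alpha : R) (psi phiinv : R -> R)
  (hbeta : 0 < beta) (hgamma : 0 < gamma) (hdelta : 0 < delta)
  (hN : 0 < St + Et + It + Rt)
  (A1 : 0 < It)
  (A2 : Et > (gamma / delta) * It)
  (A3 : St > delta * Et / (beta * It))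
  (A4a : 0 <= Rt)
  (A4b : St + Et + It + Rt > St * exp ((beta / gamma) * Rt) + Rt)
  (* alpha: the solution in (Rt, N) of x = N - St e^{(beta/gamma)Rt} e^{-(beta/gamma)x} *)
  (halpha_int : Rt < alpha < St + Et + It + Rt)
  (halpha_eq : alpha = (St + Et + It + Rt)
                 - St * exp ((beta / gamma) * Rt) * exp (- (beta / gamma) * alpha))
  (A5 : St < (gamma / beta) * exp ((beta / gamma) * (alpha - Rt)))
  (* psi: continuous and positive on (u_inf, u0], C^1 on (u_inf, u0), solving the ODE *)
  (hpsi_pos : forall u, exp (- (beta / gamma) * alpha) < u <= exp (- (beta / gamma) * Rt) ->
              0 < psi u)
  (hpsi_cont_u0 : filterlim psi (at_left (exp (- (beta / gamma) * Rt)))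
                    (locally (psi (exp (- (beta / gamma) * Rt)))))
  (hpsi_C1 : forall u, exp (- (beta / gamma) * alpha) < u < exp (- (beta / gamma) * Rt) ->
             ex_derive psi u /\ continuous (Derive psi) u)
  (hpsi_ode : forall u, exp (- (beta / gamma) * alpha) < u < exp (- (beta / gamma) * Rt) ->
              Derive psi u * psi u - (gamma + delta) / u * psi u
              = - delta * (beta * (St + Et + It + Rt)
                           - beta * St * exp ((beta / gamma) * Rt) * u + gamma * ln u) / u)
  (hpsi_u0 : psi (exp (- (beta / gamma) * Rt)) = beta * It)
  (* phiinv: the inverse of the bijection phi : (u_inf, u0] -> [0, oo) *)
  (hphiinv_range : forall t, 0 <= t ->
     exp (- (beta / gamma) * alpha) < phiinv t <= exp (- (beta / gamma) * Rt))
  (hphiinv_inv : forall t, 0 <= t ->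
     phi_of psi (exp (- (beta / gamma) * Rt)) (phiinv t) = t)
  (hphiinv_inv' : forall u, exp (- (beta / gamma) * alpha) < u <= exp (- (beta / gamma) * Rt) ->
     phiinv (phi_of psi (exp (- (beta / gamma) * Rt)) u) = u) :
  let Rf := Rsol beta gamma phiinv in
  is_lim Rf p_infty alpha /\
  alpha = (St + Et + It + Rt) - St * exp ((beta / gamma) * Rt) * exp (- (beta / gamma) * alpha) /\
  (forall s t, 0 <= s -> s < t -> Rf s < Rf t) /\
  (forall t, 0 <= t -> Rt <= Rf t /\ Rf t < alpha).
Proof.
intros Rf.
assert (Hk : 0 < beta / gamma) by (apply Rdiv_lt_0_compat; lra).
assert (Hui_u0 : exp (- (beta / gamma) * alpha) < exp (- (beta / gamma) * Rt))
  by (apply exp_increasing; nra).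
assert (Hpsi_cont : forall u, exp (- (beta / gamma) * alpha) < u < exp (- (beta / gamma) * Rt) ->
          continuous psi u)
  by (intros u Hu; apply (@ex_derive_continuous R_AbsRing R_NormedModule), hpsi_C1, Hu).
pose proof (phi_of_decreasing psi _ _ (exp_pos _) hpsi_pos hpsi_cont_u0 Hpsi_cont) as Hphi_decr.
split; [|split; [exact halpha_eq|split]].
- apply is_lim_Rsol; [lra|lra|].
  exact (is_lim_phiinv_p_infty _ _ _ _ Hui_u0 Hphi_decr hphiinv_range hphiinv_inv).
- intros s t Hs Hst; apply neg_mul_ln_lt; [apply Rdiv_lt_0_compat; lra| |].
  + apply Rlt_trans with (2 := proj1 (hphiinv_range t ltac:(lra))), exp_pos.
  + exact (phiinv_decreasing _ _ _ _ Hphi_decr hphiinv_range hphiinv_inv s t Hs Hst).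
- intros t Ht; apply neg_mul_ln_bounds; [lra|lra|exact (hphiinv_range t Ht)].
Qed.
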